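(* Let $m$, $E$ and the chaos notation be as in the context, let $f\in L^2_{\mathbb{R}}(\mathcal{H},\mathcal{B},m)$ and let $k$ be a positive integer such that the $k$-linear form $\mathcal{B}_{f_k}$ is bounded. Then the series $\sum_{(i_1,\dots,i_k)\in(\mathbb{Z}^* )^k}|\alpha^{(k)}_{i_1,\dots,i_k}|^2\sigma_{i_1}^2\cdots\sigma_{i_{k-1}}^2$ converges and $$\sum_{(i_1,\dots,i_k)\in(\mathbb{Z}^* )^k}\big|\alpha^{(k)}_{i_1,\dots,i_k}\big|^2\sigma_{i_1}^2\cdots\sigma_{i_{k-1}}^2\le\|\mathcal{B}_{f_k}\|^2\,\|E\|_2^{2(k-1)}.$$
   Context: $\mathcal{H}$ complex separable infinite-dimensional Hilbert space (inner product linear in second variable). $T$ bounded with a $\mu$-spanning $\mathbb{T}$-eigenvector field $E$ (bounded $E:\mathbb{T}\to\mathcal{H}$, $TE(\lambda)=\lambda E(\lambda)$, dense span of $\{E(\lambda):\lambda\in A\}$ whenever $\mu(A)=1$, $\mu$ normalized Lebesgue measure on the unit circle $\mathbb{T}$); $\|E\|_2^2=\int\|E(\lambda)\|^2d\mu$. $R$: $\langle Rx,y\rangle=\int\langle x,E(\lambda)\rangle\overline{\langle y,E(\lambda)\rangle}d\mu$; $m$ the Gaussian measure with covariance $R$. $(e_j)_{j\ge1}$ orthonormal eigenbasis of $R$, $Re_j=2\sigma_j^2e_j$; $\mathbb{Z}^*=\mathbb{Z}\setminus\{0\}$, $\mathfrak{e}_\ell=e_\ell$, $\mathfrak{e}_{-\ell}=ie_\ell$,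 $\sigma_{-\ell}=\sigma_\ell$. $L^2_{\mathbb{R}}$ real-valued part of $L^2(m)$; $\mathcal{G}$ closed span of $\mathfrak{Re}\langle\mathfrak{e}_k,\cdot\rangle$; $\mathcal{G}^k$ span of $k$-fold products; $:h:=h-P_kh$, $P_k$ projection onto closed span of $\mathcal{G}^0,\dots,\mathcal{G}^{k-1}$; $:\mathcal{G}^k:$ closure of Wick transforms; $f_k$ projection of $f$ onto $:\mathcal{G}^k:$. $\alpha^{(k)}_{i_1,\dots,i_k}=\langle f,:\mathfrak{Re}\langle\mathfrak{e}_{i_1},\cdot\rangle\cdots\mathfrak{Re}\langle\mathfrak{e}_{i_k},\cdot\rangle:\rangle_{L^2(m)}/(k!\sigma_{i_1}^2\cdots\sigma_{i_k}^2)$ (the symmetric coefficients with $f_k=\sum_{(\mathbb{Z}^* )^k}\alpha^{(k)}_{i_1,\dots,i_k}:\mathfrak{Re}\langle\mathfrak{e}_{i_1},\cdot\rangle\cdots\mathfrak{Re}\langle\mathfrak{e}_{i_k},\cdot\rangle:$), and $\mathcal{B}_{f_k}(x^{(1)},\dots,x^{(k)})=\sum_{(\mathbb{Z}^* )^k}\alpha^{(k)}_{i_1,\dots,i_k}x^{(1)}_{i_1}\cdots x^{(k)}_{i_k}$ on $\ell_2(\mathbb{Z}^*,\mathbb{R})^k$; bounded means well defined with $|\mathcal{B}_{f_k}(x^{(1)},\dots)|\le C\prod\|x^{(j)}\|_2$, $\|\mathcal{B}_{f_k}\|$ the sup over unit vectors. *)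

From HB Require Import structures.
From mathcomp Require Import all_boot all_order all_algebra.
From mathcomp Require Import all_classical all_reals all_analysis.
Set Implicit Arguments. Unset Strict Implicit. Unset Printing Implicit Defensive.
Import Order.TTheory GRing.Theory Num.Theory.
Local Open Scope classical_set_scope.
Local Open Scope ring_scope.

(* H is a real vector space (lmodType R) with a real inner product ip        *)
(* (= Re <.,.>) and a complex structure J (= multiplication by i).           *)
(* The complex inner product, linear in the SECOND variable, is              *)
(*      <x, y> = ip x y + i * ip (J x) y.                                    *)
Section Hilbert.
Variables (R : realType) (H : lmodType R).

(* pointed copy of H (needed to build the Borel sigma-algebra type) *)
Definition Hp : Type := H.
HB.instance Definition _ := Choice.on Hp.
HB.instance Definition _ := isPointed.Build Hp (0 : H).

Variables (ip : H -> H -> R) (J : H -> H).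

Definition nrm (x : H) : R := Num.sqrt (ip x x).

Definition cipRe (x y : H) : R := ip x y.
Definition cipIm (x y : H) : R := ip (J x) y.

Definition cscale (a b : R) (v : H) : H := a *: v + b *: J v.

Definition is_complex_Hilbert : Prop :=
  (forall x y, ip x y = ip y x) /\
  (forall (a : R) x y z, ip (a *: x + y) z = a * ip x z + ip y z) /\
  (forall x, 0 <= ip x x) /\
  (forall x, ip x x = 0 -> x = 0) /\
  (forall (a : R) x y, J (a *: x + y) = a *: J x + J y) /\
  (forall x, J (J x) = - x) /\
  (forall x y, ip (J x) (J y) = ip x y) /\
  (forall u : nat -> H,
     (forall eps : R, 0 < eps -> exists N, forall p q, (N <= p)%N -> (N <= q)%N ->
        nrm (u p - u q) < eps) ->
     exists x, forall eps : R, 0 < eps -> exists N, forall n, (N <= n)%N ->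
        nrm (u n - x) < eps).

Definition cspan_dense (S : set H) : Prop :=
  forall (x : H) (eps : R), 0 < eps ->
    exists n (a b : 'I_n -> R) (v : 'I_n -> H),
      (forall i, S (v i)) /\ nrm (x - \sum_(i < n) cscale (a i) (b i) (v i)) < eps.

Definition bounded_clinear (T : H -> H) : Prop :=
  (forall (a : R) x y, T (a *: x + y) = a *: T x + T y) /\
  (forall x, T (J x) = J (T x)) /\
  (exists M : R, forall x, nrm (T x) <= M * nrm x).

(* The unit circle is parametrised by t in [0,1[, lambda = exp(2 i pi t);   *)
(* the normalised Lebesgue measure mu on the circle is Lebesgue measure on   *)
(* [0,1[.  A field E : T -> H is represented by t |-> E(exp(2 i pi t)).     *)
Definition spanning_T_eigenfield (T : H -> H) (E : R -> H) : Prop :=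
  (exists M : R, forall t, 0 <= t < 1 -> nrm (E t) <= M) /\
  (forall y : H, measurable_fun (`[0%R, 1%R[ : set R) (fun t : R => ip y (E t))) /\
  (forall t, 0 <= t < 1 ->
     T (E t) = cscale (cos (2 * pi * t)) (sin (2 * pi * t)) (E t)) /\
  (forall A : set R, measurable A -> A `<=` `[0%R, 1%R[ ->
     lebesgue_measure A = 1%E -> cspan_dense (E @` A)).

Definition E2sq (E : R -> H) : R :=
  \int[lebesgue_measure]_(t in `[0%R, 1%R[) ip (E t) (E t).

(* <R x, y> = int <x, E> conj <y, E> dmu, for all x y (real and imaginary parts) *)
Definition is_covariance_of (E : R -> H) (Rop : H -> H) : Prop :=
  forall x y,
    cipRe (Rop x) y = \int[lebesgue_measure]_(t in `[0%R, 1%R[)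
        (cipRe x (E t) * cipRe y (E t) + cipIm x (E t) * cipIm y (E t)) /\
    cipIm (Rop x) y = \int[lebesgue_measure]_(t in `[0%R, 1%R[)
        (cipIm x (E t) * cipRe y (E t) - cipRe x (E t) * cipIm y (E t)).

Definition is_ONB (e : nat -> H) : Prop :=
  (forall j l, (0 < j)%N -> (0 < l)%N ->
     cipRe (e j) (e l) = (j == l)%:R /\ cipIm (e j) (e l) = 0) /\
  cspan_dense (e @` [set j | (0 < j)%N]).

Definition Hopen (A : set Hp) : Prop :=
  forall x : H, A x -> exists eps : R, 0 < eps /\
    forall y : H, nrm (y - x) < eps -> A y.

Definition HBorel := g_sigma_algebraType Hopen.

(* m is the (centred) Gaussian measure with covariance operator Rop :         *)
(*   int exp(i Re<y,u>) dm(u) = exp(- <R y, y> / 4)  for every y,           *)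
(* i.e. Re<y,.> ~ N(0, <Ry,y>/2) and int <x,u> conj<y,u> dm(u) = <Rx,y>.     *)
Definition is_gaussian_cov (Rop : H -> H) (m : probability HBorel R) : Prop :=
  forall y : H,
    \int[m]_(u in setT) cos (ip y u) = expR (- (ip (Rop y) y) / 4) /\
    \int[m]_(u in setT) sin (ip y u) = 0.

Definition frake (e : nat -> H) (i : int) : H :=
  if (0 < i)%R then e `|i|%N else J (e `|i|%N).

End Hilbert.

Arguments is_gaussian_cov [R H] ip Rop m.

Definition sigZ (R : realType) (sigma : nat -> R) (i : int) : R := sigma `|i|%N.

Section Chaos.
Variables (R : realType) (d : measure_display) (T : measurableType d)
  (m : probability T R).

Definition L2R (g : T -> R) : Prop :=
  measurable_fun setT g /\ (\int[m]_x ((g x) ^+ 2)%:E < +oo)%E.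

Definition spanR (S : set (T -> R)) : set (T -> R) :=
  fun g => exists n (c : 'I_n -> R) (s : 'I_n -> T -> R),
    (forall i, S (s i)) /\ g = (fun u => \sum_(i < n) c i * s i u).

Definition L2closure (S : set (T -> R)) : set (T -> R) :=
  fun g => L2R g /\ forall eps : R, 0 < eps ->
    exists h, S h /\ (\int[m]_x (((g x - h x) ^+ 2)%:E) < eps%:E)%E.

(* G = closed span of the Re<frak e_k, .>, given the family phi k = Re<frak e_k,.> *)
Definition Gspace (phi : int -> T -> R) : set (T -> R) :=
  L2closure (spanR [set phi i | i in [set i : int | i != 0]]).

Definition Gpow (phi : int -> T -> R) (j : nat) : set (T -> R) :=
  spanR (fun g => exists gs : 'I_j -> T -> R,
     (forall i, Gspace phi (gs i)) /\ g = (fun u => \prod_(i < j) gs i u)).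

Definition Vbelow (phi : int -> T -> R) (k : nat) : set (T -> R) :=
  L2closure (spanR (fun g => exists j, (j < k)%N /\ Gpow phi j g)).

(* w = :h: = h - P_k h, P_k the orthogonal projection onto Vbelow k *)
Definition is_wick (phi : int -> T -> R) (k : nat) (h w : T -> R) : Prop :=
  L2R w /\ Vbelow phi k (fun u => h u - w u) /\
  forall v, Vbelow phi k v -> (\int[m]_u ((w u * v u)%:E) = 0)%E.

End Chaos.

Section Multilinear.
Variables (R : realType) (k : nat).

Definition nzZ : set int := [set n : int | n != 0].
Definition Zstar_k : set {ffun 'I_k -> int} := [set i | forall j, i j != 0].

Definition l2Z (x : int -> R) : Prop :=
  (\esum_(n in nzZ) ((x n) ^+ 2)%:E < +oo)%E.
Definition l2normZ (x : int -> R) : R :=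
  Num.sqrt (fine (\esum_(n in nzZ) ((x n) ^+ 2)%:E)).

Definition idxN (N : nat) (t : 'I_(N.*2.+1)) : int := (t : nat)%:Z - N%:Z.

(* partial sum of B over the box ([-N,N] \ {0})^k *)
Definition boxsum (alpha : {ffun 'I_k -> int} -> R) (x : 'I_k -> int -> R)
    (N : nat) : R :=
  \sum_(t : {ffun 'I_k -> 'I_(N.*2.+1)} | [forall j, idxN (t j) != 0])
     alpha [ffun j => idxN (t j)] * \prod_(j < k) x j (idxN (t j)).

(* B(x^(1),...,x^(k)) is well defined (box partial sums converge) with value L *)
Definition Bvalue (alpha : {ffun 'I_k -> int} -> R) (x : 'I_k -> int -> R)
    (L : R) : Prop :=
  forall eps : R, 0 < eps -> exists N0, forall N, (N0 <= N)%N ->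
    `|boxsum alpha x N - L| < eps.

Definition B_bounded (alpha : {ffun 'I_k -> int} -> R) : Prop :=
  exists C : R, forall x : 'I_k -> int -> R, (forall j, l2Z (x j)) ->
    exists L, Bvalue alpha x L /\ `|L| <= C * \prod_(j < k) l2normZ (x j).

Definition B_norm (alpha : {ffun 'I_k -> int} -> R) : R :=
  sup [set r : R | exists (x : 'I_k -> int -> R) (L : R),
         (forall j, l2Z (x j) /\ l2normZ (x j) = 1) /\
         Bvalue alpha x L /\ r = `|L|].

End Multilinear.

From HB Require Import structures.
From mathcomp Require Import all_boot all_order all_algebra.
From mathcomp Require Import all_classical all_reals all_analysis.
From mathcomp Require Import ring lra zify.
Import Order.TTheory GRing.Theory Num.Theory measurable_realfun.
Set Implicit Arguments. Unset Strict Implicit. Unset Printing Implicit Defensive.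
Local Open Scope classical_set_scope.
Local Open Scope ring_scope.

(* Testing the bounded form on the coordinate unit
   vectors delta_(p_1), ..., delta_(p_(k-1)) and on the normalised row
   q |-> alpha_(p,q) shows that every row of alpha has squared l^2-norm at most
   ||B||^2.  On the other side 2 sigma_q^2 = <R e_|q|, e_|q|> is the integral
   over the circle of (Re <frake q, E>)^2 + (Re <frake (-q), E>)^2, so Bessel's
   inequality for the orthonormal family (frake q)_(q <> 0) gives
   sum_q sigma_q^2 <= ||E||_2^2.  Summing the row bound against the weights
   sigma_(i_1)^2 ... sigma_(i_(k-1))^2 over a finite box of indices bounds every
   finite partial sum of the series. *)

Section ComplexHilbert.
Variables (R : realType) (H : lmodType R) (ip : H -> H -> R) (J : H -> H).
Hypothesis hH : is_complex_Hilbert ip J.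

Lemma ip_sym x y : ip x y = ip y x.
Proof. by case: hH. Qed.

Lemma ip_ge0 x : 0 <= ip x x.
Proof. by case: hH => _ [_ []]. Qed.

Lemma ipJJ x y : ip (J x) (J y) = ip x y.
Proof. by case: hH => _ [_ [_ [_ [_ [_ []]]]]]. Qed.

Lemma ipDl x y z : ip (x + y) z = ip x z + ip y z.
Proof. by case: hH => _ [lin _]; rewrite -[x]scale1r lin mul1r scale1r. Qed.

Lemma ip0l z : ip 0 z = 0.
Proof. by apply: (addrI (ip 0 z)); rewrite -ipDl !addr0. Qed.

Lemma ipZl a x z : ip (a *: x) z = a * ip x z.
Proof. by case: hH => _ [lin _]; rewrite -[a *: x]addr0 lin ip0l addr0. Qed.

Lemma ipBl x y z : ip (x - y) z = ip x z - ip y z.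
Proof. by rewrite ipDl -scaleN1r ipZl mulN1r. Qed.

Lemma ipBr x y z : ip z (x - y) = ip z x - ip z y.
Proof. by rewrite ip_sym ipBl !(ip_sym _ z). Qed.

Lemma ip_sumZl (I : Type) (s : seq I) (c : I -> R) (v : I -> H) z :
  ip (\sum_(i <- s) c i *: v i) z = \sum_(i <- s) c i * ip (v i) z.
Proof.
elim: s => [|a s IH]; first by rewrite !big_nil ip0l.
by rewrite !big_cons ipDl ipZl IH.
Qed.

Lemma ip_sumZr (I : Type) (s : seq I) (c : I -> R) (v : I -> H) z :
  ip z (\sum_(i <- s) c i *: v i) = \sum_(i <- s) c i * ip z (v i).
Proof. by rewrite ip_sym ip_sumZl; apply: eq_bigr => i _; rewrite ip_sym. Qed.

Variable e : nat -> H.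
Hypothesis he : is_ONB ip J e.

Lemma frake_orthonormal (q q' : int) : q != 0 -> q' != 0 ->
  ip (frake J e q) (frake J e q') = (q == q')%:R.
Proof.
move=> q0 q'0; have [on _] := he.
have [q_gt0 q'_gt0] : (0 < `|q|)%N /\ (0 < `|q'|)%N by rewrite !absz_gt0.
have [on_qq' onJ_qq'] := on _ _ q_gt0 q'_gt0.
have [_ onJ_q'q] := on _ _ q'_gt0 q_gt0.
rewrite /cipRe /cipIm in on_qq' onJ_qq' onJ_q'q.
rewrite /frake; case: (ltrP 0 q) => q_pos; case: (ltrP 0 q') => q'_pos.
- by rewrite on_qq'; congr (_ %:R); apply/eqP/eqP; lia.
- by rewrite ip_sym onJ_q'q; case: eqP => //; lia.
- by rewrite onJ_qq'; case: eqP => //; lia.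
- by rewrite ipJJ on_qq'; congr (_ %:R); apply/eqP/eqP; lia.
Qed.

Lemma bessel_frake (G : seq int) x : uniq G -> all (fun q => q != 0) G ->
  \sum_(q <- G) ip (frake J e q) x ^+ 2 <= ip x x.
Proof.
move=> uG /allP nzG; set c := fun q => ip (frake J e q) x.
set S := \sum_(q <- G) c q *: frake J e q.
have coefS q : q \in G -> ip (frake J e q) S = c q.
  move=> qG; rewrite ip_sumZr (bigD1_seq q) //= frake_orthonormal ?nzG // eqxx mulr1.
  rewrite big_seq_cond big1 ?addr0 // => q' /andP [q'G q'q].
  by rewrite frake_orthonormal ?nzG // eq_sym (negbTE q'q) mulr0.
have ipSx : ip S x = \sum_(q <- G) c q ^+ 2.
  by rewrite ip_sumZl; apply: eq_bigr => q _; rewrite expr2.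
have ipSS : ip S S = \sum_(q <- G) c q ^+ 2.
  by rewrite {1}/S ip_sumZl; apply: eq_big_seq => q qG; rewrite coefS // expr2.
have := ip_ge0 (x - S); rewrite ipBl !ipBr ipSS (ip_sym x S) ipSx; lra.
Qed.

End ComplexHilbert.

Section RealIntegral.
Context d (T : measurableType d) (R : realType) (mu : {measure set T -> \bar R}).
Variables (D : set T) (mD : measurable D).

(* Unlike [ge0_le_integral] this needs no measurability, which [ip (E t) (E t)]
   is not known to have: the comparison goes through the supremum defining the
   integral of a nonnegative function. *)
Lemma le_integral_nonneg (f g : T -> R) : (forall t, D t -> 0 <= f t <= g t) ->
  (\int[mu]_(t in D) (f t)%:E <= \int[mu]_(t in D) (g t)%:E)%E.
Proof.
move=> fg; have f0 t : D t -> (0 <= (f t)%:E)%E by move/fg/andP => [].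
have g0 t : D t -> (0 <= (g t)%:E)%E by move/fg/andP => [/le_trans]; apply.
rewrite (ge0_integralE mu f0) (ge0_integralE mu g0).
apply: ereal_sup_le => _ [h hf <-]; exists h => //= t.
apply: le_trans (hf t) _; rewrite !patchE; case: ifP => // /set_mem /fg /andP [_].
by rewrite lee_fin.
Qed.

Lemma integrable_sum_seq (I : eqType) (s : seq I) (g : I -> T -> R) :
  (forall i, i \in s -> mu.-integrable D (EFin \o g i)) ->
  mu.-integrable D (EFin \o fun t => \sum_(i <- s) g i t).
Proof.
move=> int_g; have := @integrable_sum _ _ _ mu D mD _ s (fun i => i \in s) _ int_g.
by apply: eq_integrable => // t _ /=; rewrite sumEFin -big_seq.
Qed.

Lemma Rintegral_sum (I : eqType) (s : seq I) (g : I -> T -> R) :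
  (forall i, i \in s -> mu.-integrable D (EFin \o g i)) ->
  \int[mu]_(t in D) (\sum_(i <- s) g i t) = \sum_(i <- s) \int[mu]_(t in D) g i t.
Proof.
elim: s => [_|i s IH int_g].
  under eq_fun do rewrite big_nil.
  by rewrite big_nil Rintegral_cst // mul0r.
have int_tail j : j \in s -> mu.-integrable D (EFin \o g j).
  by move=> js; apply: int_g; rewrite inE js orbT.
rewrite (_ : (fun t => _) = fun t => g i t + \sum_(j <- s) g j t); last first.
  by apply/funext => t; rewrite big_cons.
by rewrite big_cons RintegralD ?int_g ?mem_head ?integrable_sum_seq // IH.
Qed.

End RealIntegral.

Section TraceBound.
Variables (R : realType) (H : lmodType R) (ip : H -> H -> R) (J : H -> H).
Hypothesis hH : is_complex_Hilbert ip J.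
Variables (T : H -> H) (E : R -> H).
Hypothesis hE : spanning_T_eigenfield ip J T E.

Local Notation D := ([set` `[0%R, 1%R[] : set R).
Local Notation mu := (@lebesgue_measure R).

Lemma measurable_itv01 : measurable D.
Proof. exact: measurable_itv. Qed.

Lemma lebesgue_itv01_lty : (mu D < +oo)%E.
Proof. by rewrite lebesgue_measure_itv /= lte_fin ltr01 /= oppr0 adde0 ltry. Qed.

Lemma bounded_integrable_itv01 (g : R -> R) (M : R) : measurable_fun D g ->
  (forall t, D t -> `|g t| <= M) -> mu.-integrable D (EFin \o g).
Proof.
move=> mg gM; apply: measurable_bounded_integrable => //.
  exact: lebesgue_itv01_lty.
by exists M; split; [exact: num_real | move=> M' /ltW MM' t /gM /le_trans; apply].
Qed.

Lemma ipEE_bounded : exists M, forall t, D t -> 0 <= ip (E t) (E t) <= M.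
Proof.
have [[M EM] _] := hE; exists (M ^+ 2) => t Dt.
have EE0 := ip_ge0 hH (E t); rewrite EE0 -(sqr_sqrtr EE0) /=.
have /= := Dt; rewrite in_itv /= => /andP [t0 t1].
have := EM t; rewrite /nrm t0 t1 => /(_ isT) EtM.
by rewrite lerXn2r ?nnegrE ?sqrtr_ge0 //; apply: le_trans EtM.
Qed.

Lemma integral_ipEE_fin_num :
  (\int[mu]_(t in D) (ip (E t) (E t))%:E)%E \is a fin_num.
Proof.
have [M EM] := ipEE_bounded.
rewrite ge0_fin_numE; last by apply: integral_ge0 => t _; rewrite lee_fin (ip_ge0 hH).
apply: le_lt_trans (le_integral_nonneg mu (g := cst M) EM) _.
have D0 : D 0 by rewrite /= in_itv /= lexx ltr01.
have M0 : 0 <= M by have /andP [EE0 EEM] := EM 0 D0; exact: le_trans EE0 EEM.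
rewrite (_ : (fun t => _) = cst M%:E) // integral_cst ?measurable_itv01 //.
by apply: lte_mul_pinfty; [rewrite lee_fin | | exact: lebesgue_itv01_lty].
Qed.

Lemma le_E2sq (g : R -> R) : mu.-integrable D (EFin \o g) ->
  (forall t, D t -> 0 <= g t <= ip (E t) (E t)) -> \int[mu]_(t in D) g t <= E2sq ip E.
Proof.
move=> int_g gE; apply: fine_le; last exact: le_integral_nonneg.
- exact: integrable_fin_num int_g.
- exact: integral_ipEE_fin_num.
Qed.

Variables (e : nat -> H) (Rop : H -> H) (sigma : nat -> R).
Hypothesis he : is_ONB ip J e.
Hypothesis hR : is_covariance_of ip J E Rop.
Hypothesis heig : forall j, (0 < j)%N -> Rop (e j) = (2 * sigma j ^+ 2) *: e j.

Definition coordE_sqr (q : int) (t : R) : R := ip (frake J e q) (E t) ^+ 2.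

Lemma coordE_sqr_bounds q t : q != 0 -> 0 <= coordE_sqr q t <= ip (E t) (E t).
Proof.
move=> q0; rewrite sqr_ge0 /=.
by have := bessel_frake hH he (E t) (isT : uniq [:: q]); rewrite /= q0 big_seq1; apply.
Qed.

Lemma integrable_coordE_sqr q : q != 0 -> mu.-integrable D (EFin \o coordE_sqr q).
Proof.
move=> q0; have [M EM] := ipEE_bounded; apply: (bounded_integrable_itv01 (M := M)).
  have [_ [mE _]] := hE; set c := fun t => ip (frake J e q) (E t).
  have -> : coordE_sqr q = c \* c by apply/funext => t; rewrite /coordE_sqr expr2.
  by apply: measurable_funM; apply: mE.
move=> t Dt; have /andP [c0 cE] := coordE_sqr_bounds t q0.
by rewrite ger0_norm //; apply: le_trans cE _; have /andP [] := EM t Dt.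
Qed.

Lemma sigma_sqr_integral q : q != 0 ->
  2 * sigZ sigma q ^+ 2 = \int[mu]_(t in D) (coordE_sqr q t + coordE_sqr (- q) t).
Proof.
move=> q0; have q_gt0 : (0 < `|q|)%N by rewrite absz_gt0.
have [cov _] := hR (e `|q|%N) (e `|q|%N).
have [on _] := he; have [e_unit _] := on _ _ q_gt0 q_gt0.
rewrite /cipRe heig // (ipZl hH) -[ip _ _]/(cipRe ip _ _) e_unit eqxx mulr1 in cov.
rewrite /sigZ cov; congr (Rintegral _ _ _); apply/funext => t.
rewrite /coordE_sqr /frake /cipIm /cipRe abszN oppr_gt0 !expr2.
case: (ltrP 0 q) => [q_pos | q_le0]; first by rewrite ltNge ltW.
by rewrite lt_neqAle q0 q_le0 addrC.
Qed.

Lemma sum_integral_coordE_sqr_le (G : seq int) : uniq G -> all (fun q => q != 0) G ->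
  \sum_(q <- G) \int[mu]_(t in D) coordE_sqr q t <= E2sq ip E.
Proof.
move=> uG nzG; have /allP nz := nzG.
rewrite -Rintegral_sum; last 2 first.
- exact: measurable_itv01.
- by move=> q /nz /integrable_coordE_sqr.
apply: le_E2sq => [|t Dt].
  apply: (@integrable_sum_seq _ _ _ mu _ measurable_itv01 _ G coordE_sqr).
  by move=> q /nz /integrable_coordE_sqr.
rewrite sumr_ge0 /= => [|q _]; last exact: sqr_ge0.
by have := bessel_frake hH he (E t) uG nzG.
Qed.

Lemma sum_sigma_sqr_le (G : seq int) : uniq G -> all (fun q => q != 0) G ->
  \sum_(q <- G) sigZ sigma q ^+ 2 <= E2sq ip E.
Proof.
move=> uG nzG; have /allP nz := nzG.
have uNG : uniq (map -%R G) by rewrite (map_inj_uniq (@oppr_inj _)).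
have nzNG : all (fun q => q != 0) (map -%R G).
  by rewrite all_map; apply/allP => q /nz /=; rewrite oppr_eq0.
have := sum_integral_coordE_sqr_le uG nzG.
have := sum_integral_coordE_sqr_le uNG nzNG.
suff -> : \sum_(q <- G) sigZ sigma q ^+ 2 = (\sum_(q <- G) \int[mu]_(t in D) coordE_sqr q t
    + \sum_(q <- map -%R G) \int[mu]_(t in D) coordE_sqr q t) / 2 by lra.
rewrite big_map -big_split /= mulr_suml; apply: eq_big_seq => q qG.
rewrite -RintegralD ?measurable_itv01 ?integrable_coordE_sqr ?oppr_eq0 ?nz //.
by rewrite -sigma_sqr_integral ?nz // mulrC mulKf.
Qed.

End TraceBound.

Lemma esum_sqr_finite_support (R : realType) (y : int -> R) (Q : seq int) :
  uniq Q -> all (fun q => q != 0) Q -> (forall z, z \notin Q -> y z = 0) ->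
  \esum_(z in nzZ) ((y z) ^+ 2)%:E = (\sum_(q <- Q) y q ^+ 2)%:E.
Proof.
move=> uQ /allP nzQ yQ; rewrite esum_mkcond.
rewrite (eq_esum (b := fun z => if z \in [set` Q] then ((y z) ^+ 2)%:E else 0%E)).
  rewrite -esum_mkcond esum_fset; first by rewrite -fsbig_seq // sumEFin.
  - exact: finite_seq.
  - by move=> z _; rewrite lee_fin sqr_ge0.
move=> z _; case: (boolP (z \in Q)) => zQ; last by rewrite yQ // expr0n /= !if_same.
have -> : z \in nzZ by apply/mem_set; exact: nzQ.
by have -> : z \in [set` Q] by apply/mem_set.
Qed.

Definition box_index (N : nat) (z : int) : 'I_(N.*2.+1) := inord (absz (z + N%:Z)).

Lemma box_indexK N z : (`|z| <= N)%N -> idxN (box_index N z) = z.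
Proof. by move=> zN; rewrite /idxN /box_index inordK; lia. Qed.

Lemma idxNK N (t : 'I_(N.*2.+1)) : box_index N (idxN t) = t.
Proof. by apply: val_inj; rewrite /box_index /idxN /= inordK; have := ltn_ord t; lia. Qed.

Section BoundedForm.
Variables (R : realType) (k : nat) (alpha : {ffun 'I_k -> int} -> R).

Lemma Bvalue_unique (x : 'I_k -> int -> R) L1 L2 :
  Bvalue alpha x L1 -> Bvalue alpha x L2 -> L1 = L2.
Proof.
move=> B1 B2; apply/eqP/negPn/negP => L12.
have d_gt0 : 0 < `|L1 - L2| / 2 by rewrite divr_gt0 // normr_gt0 subr_eq0.
have [N1 BN1] := B1 _ d_gt0; have [N2 BN2] := B2 _ d_gt0.
have := BN1 _ (leq_maxl N1 N2); have := BN2 _ (leq_maxr N1 N2).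
set b := boxsum _ _ _ => b2 b1.
have : `|L1 - L2| <= `|b - L1| + `|b - L2|.
  rewrite (_ : L1 - L2 = (b - L2) - (b - L1)); last by ring.
  by rewrite [leRHS]addrC ler_normB.
lra.
Qed.

Hypothesis hB : B_bounded alpha.

Lemma le_Bnorm (x : 'I_k -> int -> R) L :
  (forall j, l2Z (x j) /\ l2normZ (x j) = 1) -> Bvalue alpha x L -> `|L| <= B_norm alpha.
Proof.
move=> x_unit BxL; have [C BC] := hB.
apply: sup_upper_bound; last by exists x, L.
split; first by exists `|L|, x, L.
exists C => _ [y [L' [y_unit [ByL' ->]]]].
have [L'' [ByL'' L''C]] := BC y (fun j => (y_unit j).1).
rewrite (Bvalue_unique ByL' ByL''); apply: le_trans L''C _.
by rewrite big1 ?mulr1 // => j _; exact: (y_unit j).2.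
Qed.

Lemma boxsum_finite_support (x : 'I_k -> int -> R) (N : nat) (L : seq {ffun 'I_k -> int}) :
  uniq L -> (forall i, i \in L -> forall j, i j != 0 /\ (`|i j| <= N)%N) ->
  (forall i, alpha i * \prod_(j < k) x j (i j) != 0 -> i \in L) ->
  boxsum alpha x N = \sum_(i <- L) alpha i * \prod_(j < k) x j (i j).
Proof.
move=> uL L_box L_supp; rewrite /boxsum.
set F := fun i : {ffun 'I_k -> int} => alpha i * \prod_(j < k) x j (i j).
set psi := fun i : {ffun 'I_k -> int} => [ffun j => box_index N (i j)].
have psiK i : i \in L -> [ffun j => idxN (psi i j)] = i.
  by move=> iL; apply/ffunP => j; rewrite !ffunE box_indexK //; case: (L_box i iL j).
have idx_ffunE (t : {ffun 'I_k -> 'I_N.*2.+1}) :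
    alpha [ffun j => idxN (t j)] * \prod_(j < k) x j (idxN (t j)) =
    F [ffun j => idxN (t j)].
  by rewrite /F; under [in RHS]eq_bigr do rewrite ffunE.
have uL' : uniq (map psi L).
  rewrite (map_inj_in_uniq _) // => i i' iL i'L psi_ii'.
  by rewrite -(psiK i iL) -(psiK i' i'L) psi_ii'.
have -> : \sum_(i <- L) F i = \sum_(t <- map psi L) F [ffun j => idxN (t j)].
  by rewrite big_map; apply: eq_big_seq => i iL; rewrite psiK.
rewrite [RHS]big_uniq // (bigID (mem (map psi L))) /= [X in _ + X]big1 ?addr0; last first.
  move=> t /andP [_ tL]; rewrite idx_ffunE; apply/eqP/negPn/negP => /L_supp iL.
  suff : t \in map psi L by rewrite (negbTE tL).
  have -> : t = psi [ffun j => idxN (t j)] by apply/ffunP => j; rewrite !ffunE idxNK.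
  exact: map_f.
apply: eq_big => [t | t _]; last exact: idx_ffunE.
apply/andb_idl => /mapP [i iL ->]; apply/forallP => j.
by rewrite ffunE box_indexK; case: (L_box i iL j).
Qed.

End BoundedForm.

Lemma l2_unit_finite_support (R : realType) (y : int -> R) (Q : seq int) :
  uniq Q -> all (fun q => q != 0) Q -> (forall z, z \notin Q -> y z = 0) ->
  \sum_(q <- Q) y q ^+ 2 = 1 -> l2Z y /\ l2normZ y = 1.
Proof.
move=> uQ nzQ yQ y1; rewrite /l2Z /l2normZ (esum_sqr_finite_support uQ nzQ yQ) y1.
by split; [exact: ltry | rewrite /= sqrtr1].
Qed.

Section FfunRcons.
Variables (T : Type) (n : nat).

Definition ffun_rcons (p : {ffun 'I_n -> T}) (x : T) : {ffun 'I_n.+1 -> T} :=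
  [ffun j => oapp p x (unlift ord_max j)].

Lemma ffun_rcons_lift p x j : ffun_rcons p x (lift ord_max j) = p j.
Proof. by rewrite ffunE liftK. Qed.

Lemma ffun_rcons_max p x : ffun_rcons p x ord_max = x.
Proof. by rewrite ffunE unlift_none. Qed.

Lemma ffun_rcons_eta (i : {ffun 'I_n.+1 -> T}) :
  ffun_rcons [ffun j => i (lift ord_max j)] (i ord_max) = i.
Proof.
apply/ffunP => j; case: (unliftP ord_max j) => [j'|] ->.
  by rewrite ffun_rcons_lift ffunE.
by rewrite ffun_rcons_max.
Qed.

Lemma ffun_rcons_inj p p' x x' :
  ffun_rcons p x = ffun_rcons p' x' -> p = p' /\ x = x'.
Proof.
move=> pxp'x'; split; last by rewrite -(ffun_rcons_max p x) pxp'x' ffun_rcons_max.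
by apply/ffunP => j; rewrite -(ffun_rcons_lift p x) pxp'x' ffun_rcons_lift.
Qed.

End FfunRcons.

Lemma big_ord_recr_lift (R : Type) (idx : R) (op : Monoid.law idx) n (F : 'I_n.+1 -> R) :
  \big[op/idx]_(j < n.+1) F j = op (\big[op/idx]_(j < n) F (lift ord_max j)) (F ord_max).
Proof.
rewrite big_ord_recr; congr (op _ _); apply: eq_bigr => j _; congr F.
exact/val_inj/esym/lift_max.
Qed.

Lemma big_ord_init (R : Type) (idx : R) (op : Monoid.law idx) n (F : 'I_n.+1 -> R) :
  \big[op/idx]_(j < n.+1 | (j < n)%N) F j = \big[op/idx]_(j < n) F (lift ord_max j).
Proof.
rewrite (big_ord_narrow (leqnSn n)); apply: eq_bigr => j _; congr F.
exact/val_inj/esym/lift_max.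
Qed.

Section Rows.
Variables (R : realType) (n : nat) (alpha : {ffun 'I_n.+1 -> int} -> R).

Definition row_probe (p : {ffun 'I_n -> int}) (y : int -> R) : 'I_n.+1 -> int -> R :=
  fun j z => oapp (fun j' => (z == p j')%:R) (y z) (unlift ord_max j).

Lemma prod_row_probe p y (i : {ffun 'I_n.+1 -> int}) :
  \prod_(j < n.+1) row_probe p y j (i j) =
  \prod_(j < n) (i (lift ord_max j) == p j)%:R * y (i ord_max).
Proof.
rewrite big_ord_recr_lift /row_probe unlift_none.
by under eq_bigr do rewrite liftK.
Qed.

Lemma Bvalue_row_probe (p : {ffun 'I_n -> int}) (Q : seq int) (y : int -> R) :
  (forall j, p j != 0) -> uniq Q -> all (fun q => q != 0) Q ->
  (forall z, z \notin Q -> y z = 0) ->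
  Bvalue alpha (row_probe p y) (\sum_(q <- Q) alpha (ffun_rcons p q) * y q).
Proof.
move=> p_nz uQ /allP nzQ yQ eps eps0.
exists (maxn (\max_(j < n) `|p j|%N) (\max_(q <- Q) `|q|%N)) => N N_ge.
rewrite (boxsum_finite_support (L := map (ffun_rcons p) Q)).
- rewrite big_map (eq_big_seq (fun q => alpha (ffun_rcons p q) * y q)) ?subrr ?normr0 //.
  move=> q _; rewrite prod_row_probe ffun_rcons_max big1 ?mul1r // => j _.
  by rewrite ffun_rcons_lift eqxx.
- by rewrite map_inj_uniq // => q q' /(@ffun_rcons_inj _ _ p p) [].
- move=> _ /mapP [q qQ ->] j; case: (unliftP ord_max j) => [j'|] ->.
    rewrite ffun_rcons_lift p_nz; split => //; apply: leq_trans N_ge.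
    by apply: leq_trans (leq_maxl _ _); apply: (leq_bigmax (F := fun j => `|p j|%N)).
  rewrite ffun_rcons_max nzQ //; split => //; apply: leq_trans N_ge.
  by apply: leq_trans (leq_maxr _ _); apply: leq_bigmax_seq.
- move=> i; rewrite prod_row_probe !mulf_eq0 !negb_or.
  move=> /andP [_ /andP [/prodf_neq0 lift_eq yi_nz]]; apply/mapP; exists (i ord_max).
    by apply/negPn/negP => /yQ yi0; rewrite yi0 eqxx in yi_nz.
  rewrite -[LHS]ffun_rcons_eta; congr ffun_rcons; apply/ffunP => j; rewrite ffunE.
  by have := lift_eq j isT; case: (i (lift ord_max j) =P p j) => // _; rewrite eqxx.
Qed.

Hypothesis hB : B_bounded alpha.

Lemma row_sum_sqr_le_Bnorm (p : {ffun 'I_n -> int}) (Q : seq int) :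
  (forall j, p j != 0) -> uniq Q -> all (fun q => q != 0) Q ->
  \sum_(q <- Q) alpha (ffun_rcons p q) ^+ 2 <= B_norm alpha ^+ 2.
Proof.
move=> p_nz uQ nzQ; set a := \sum_(q <- Q) _.
have [->|a_neq0] := eqVneq a 0; first exact: sqr_ge0.
have a_gt0 : 0 < a by rewrite lt_def a_neq0 sumr_ge0 // => q _; exact: sqr_ge0.
set c := Num.sqrt a; have c_gt0 : 0 < c by rewrite sqrtr_gt0.
have c2 : c ^+ 2 = a by rewrite sqr_sqrtr // ltW.
set y := fun z => if z \in Q then alpha (ffun_rcons p z) / c else 0.
have yQ z : z \notin Q -> y z = 0 by rewrite /y => /negbTE ->.
have probe_unit j : l2Z (row_probe p y j) /\ l2normZ (row_probe p y j) = 1.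
  case: (unliftP ord_max j) => [j'|] ->; rewrite /row_probe ?liftK ?unlift_none /=.
    apply: (@l2_unit_finite_support _ _ [:: p j']); rewrite /= ?p_nz //.
      by move=> z; rewrite inE => /negbTE ->.
    by rewrite big_seq1 eqxx expr1n.
  apply: (l2_unit_finite_support uQ nzQ yQ).
  transitivity (a / c ^+ 2); last by rewrite c2 divff // lt0r_neq0.
  by rewrite /a mulr_suml; apply: eq_big_seq => q qQ; rewrite /y qQ expr_div_n.
have := le_Bnorm hB probe_unit (Bvalue_row_probe p_nz uQ nzQ yQ).
have -> : \sum_(q <- Q) alpha (ffun_rcons p q) * y q = c.
  transitivity (a / c); last by rewrite -c2 expr2 mulfK // lt0r_neq0.
  by rewrite /a mulr_suml; apply: eq_big_seq => q qQ; rewrite /y qQ mulrA -expr2.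
rewrite ger0_norm => [cB|]; last exact: ltW.
by rewrite -c2; nra.
Qed.

End Rows.

Lemma ler_sum_uniq_subset (R : numDomainType) (X : eqType) (s s' : seq X) (h : X -> R) :
  uniq s -> uniq s' -> {subset s <= s'} -> (forall x, x \in s' -> 0 <= h x) ->
  \sum_(x <- s) h x <= \sum_(x <- s') h x.
Proof.
move=> us us' ss' h_ge0.
have perm_s : perm_eq s [seq x <- s' | x \in s].
  apply: uniq_perm => // [|x]; first exact: filter_uniq.
  by rewrite mem_filter; case: (boolP (x \in s)) => // /ss' ->.
rewrite (perm_big _ perm_s) big_filter [leRHS](bigID (mem s)) /= lerDl.
by rewrite big_seq_cond sumr_ge0 // => x /andP [/h_ge0].
Qed.

Section BoxBound.
Variables (R : realType) (n : nat) (alpha : {ffun 'I_n.+1 -> int} -> R).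
Hypothesis hB : B_bounded alpha.
Variables (w : int -> R) (s0 : R).
Hypothesis w_ge0 : forall z, 0 <= w z.
Hypothesis sum_w_le :
  forall G : seq int, uniq G -> all (fun q => q != 0) G -> \sum_(q <- G) w q <= s0.

Definition weighted_sqr (i : {ffun 'I_n.+1 -> int}) : R :=
  alpha i ^+ 2 * \prod_(j < n.+1 | (j < n)%N) w (i j).

Section BoxPoint.
Variables (G : seq int).
Hypotheses (uG : uniq G) (nzG : all (fun q => q != 0) G).

Definition box_point (d : {ffun 'I_n -> 'I_(size G)} * 'I_(size G)) :=
  ffun_rcons [ffun j => nth 0 G (d.1 j)] (nth 0 G d.2).

Lemma box_point_inj : injective box_point.
Proof.
have nth_inj : injective (fun q : 'I_(size G) => nth 0 G q).
  by move=> q q' /eqP; rewrite nth_uniq // => /eqP /val_inj.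
move=> [p q] [p' q'] eq_pts; have [/ffunP pp' /nth_inj /= qq'] := ffun_rcons_inj eq_pts.
congr pair => //; apply/ffunP => j; apply: nth_inj.
by have := pp' j; rewrite !ffunE; exact: id.
Qed.

Lemma mem_codom_box_point (i : {ffun 'I_n.+1 -> int}) :
  (forall j, i j \in G) -> i \in codom box_point.
Proof.
move=> iG; pose pos j : 'I_(size G) := Ordinal (etrans (index_mem _ _) (iG j)).
apply/codomP; exists ([ffun j => pos (lift ord_max j)], pos ord_max).
rewrite -[LHS]ffun_rcons_eta /box_point /=.
congr (ffun_rcons _ _); last by rewrite nth_index.
by apply/ffunP => j; rewrite !ffunE nth_index.
Qed.

Lemma sum_box_point_le :
  \sum_d weighted_sqr (box_point d) <= B_norm alpha ^+ 2 * s0 ^+ n.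
Proof.
have /allP G_nz := nzG.
have sum_nth (F : int -> R) : \sum_(q < size G) F (nth 0 G q) = \sum_(z <- G) F z.
  by rewrite [RHS](big_nth 0) big_mkord.
pose pt (p : {ffun 'I_n -> 'I_(size G)}) : {ffun 'I_n -> int} := [ffun j => nth 0 G (p j)].
pose W (p : {ffun 'I_n -> 'I_(size G)}) := \prod_(j < n) w (nth 0 G (p j)).
have -> : \sum_d weighted_sqr (box_point d) =
    \sum_p W p * \sum_(q < size G) alpha (ffun_rcons (pt p) (nth 0 G q)) ^+ 2.
  transitivity (\sum_p \sum_(q < size G) weighted_sqr (box_point (p, q))).
    by rewrite pair_bigA; apply: eq_bigr => -[].
  apply: eq_bigr => p _; rewrite mulr_sumr; apply: eq_bigr => q _.
  rewrite /weighted_sqr mulrC big_ord_init; congr (_ * _).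
  by apply: eq_bigr => j _; rewrite ffun_rcons_lift ffunE.
apply: (@le_trans _ _ (\sum_p W p * B_norm alpha ^+ 2)).
  apply: ler_sum => p _; rewrite ler_wpM2l ?prodr_ge0 //.
  rewrite (sum_nth (fun z => alpha (ffun_rcons (pt p) z) ^+ 2)) row_sum_sqr_le_Bnorm //.
  by move=> j; rewrite ffunE G_nz // mem_nth.
rewrite -mulr_suml mulrC ler_wpM2l ?sqr_ge0 // -[n in s0 ^+ n]card_ord -prodr_const.
rewrite -(bigA_distr_bigA (fun (_ : 'I_n) (q : 'I_(size G)) => w (nth 0 G q))) /=.
by apply: ler_prod => j _; rewrite sumr_ge0 //= sum_nth sum_w_le.
Qed.

End BoxPoint.

Lemma sum_weighted_sqr_le (s : seq {ffun 'I_n.+1 -> int}) :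
  uniq s -> (forall i, i \in s -> Zstar_k i) ->
  \sum_(i <- s) weighted_sqr i <= B_norm alpha ^+ 2 * s0 ^+ n.
Proof.
move=> us sZ; set G := undup (flatten (map (fun i : {ffun _ -> _} => codom i) s)).
have memG i j : i \in s -> i j \in G.
  by move=> si; rewrite mem_undup; apply/flatten_mapP; exists i => //; exact: codom_f.
have nzG : all (fun q => q != 0) G.
  by apply/allP => z; rewrite mem_undup => /flatten_mapP [i si /codomP [j ->]]; exact: sZ.
apply: le_trans (sum_box_point_le (undup_uniq _) nzG).
have -> : \sum_d weighted_sqr (box_point (G := G) d) =
    \sum_(i <- codom (box_point (G := G))) weighted_sqr i.
  by rewrite big_map big_enum.
apply: ler_sum_uniq_subset => // [|i si|i _].
- by rewrite map_inj_uniq ?enum_uniq //; exact: box_point_inj (undup_uniq _).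
- by apply: mem_codom_box_point => j; exact: memG.
- by rewrite /weighted_sqr mulr_ge0 ?sqr_ge0 ?prodr_ge0.
Qed.

End BoxBound.

Theorem corollary5p13 (R : realType) (H : lmodType R)
  (ip : H -> H -> R) (J : H -> H) (hH : is_complex_Hilbert ip J)
  (T : H -> H) (hT : bounded_clinear ip J T)
  (E : R -> H) (hE : spanning_T_eigenfield ip J T E)
  (Rop : H -> H) (hR : is_covariance_of ip J E Rop)
  (e : nat -> H) (sigma : nat -> R) (he : is_ONB ip J e)
  (heig : forall j, (0 < j)%N -> Rop (e j) = (2 * sigma j ^+ 2) *: e j)
  (m : probability (HBorel ip) R) (hm : is_gaussian_cov ip Rop m)
  (f : HBorel ip -> R) (hf : L2R m f)
  (k : nat) (hk : (0 < k)%N)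
  (alpha : {ffun 'I_k -> int} -> R)
  (halpha : forall i, Zstar_k i ->
     exists w : HBorel ip -> R,
       is_wick m (fun (l : int) (u : HBorel ip) => ip (frake J e l) u) k
         (fun u : HBorel ip => \prod_(j < k) ip (frake J e (i j)) u) w /\
       alpha i = (\int[m]_(u in setT) (f u * w u)) /
                 (k`!%:R * \prod_(j < k) sigZ sigma (i j) ^+ 2))
  (hB : B_bounded alpha) :
  let S := \esum_(i in @Zstar_k k)
             ((alpha i) ^+ 2 * \prod_(j < k | (j < k.-1)%N) sigZ sigma (i j) ^+ 2)%:E in
  (S < +oo)%E /\ (S <= (B_norm alpha ^+ 2 * E2sq ip E ^+ k.-1)%:E)%E.
Proof.
move: alpha halpha hB; case: k hk => [//|n] _ alpha _ hB S /=.
have sum_sigma := sum_sigma_sqr_le hH hE he hR heig.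
have S_le : (S <= (B_norm alpha ^+ 2 * E2sq ip E ^+ n)%:E)%E.
  apply: ge_ereal_sup => _ [A [finA AZ] <-].
  rewrite fsbig_finite //= sumEFin lee_fin.
  apply: (sum_weighted_sqr_le hB _ sum_sigma) => [z||i]; first exact: sqr_ge0.
    exact: finmap.fset_uniq.
  by rewrite (in_fset_set finA) => /set_mem; exact: AZ.
by split => //; apply: le_lt_trans S_le _; exact: ltry.
Qed.
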